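(* Let $a,b\in C\ell_{1,2}$. If $\mathrm{Cim}(a)$ is invertible and $N(\mathrm{Cim}(a))=N(\mathrm{Cim}(b))$, $T(\mathrm{Cim}(a))=T(\mathrm{Cim}(b))$, then at least one of the four elements $\mathrm{Cim}(a)e_t+e_t\,\mathrm{Cim}(b)$, $t=0,1,2,3$, is invertible.
   Context: $C\ell_{1,2}$ is the real Clifford algebra generated by $i_1,i_2,i_3$ with $i_1^2=1$, $i_2^2=i_3^2=-1$ and $i_ti_m=-i_mi_t$ for $t\neq m$, with real basis $e_0=1$, $e_1=i_1$, $e_2=i_2$, $e_3=i_1i_2$, $e_4=i_3$, $e_5=i_1i_3$, $e_6=i_2i_3$, $e_7=i_1i_2i_3$. For $a=\sum_{t=0}^7 a_te_t$: $\mathrm{Cim}(a)=a_1e_1+a_2e_2+a_3e_3+a_4e_4+a_5e_5+a_6e_6$; $N(a)=a_0^2-a_1^2+a_2^2-a_3^2+a_4^2-a_5^2+a_6^2-a_7^2$; $T(a)=a_0a_7+a_2a_5-a_1a_6-a_3a_4$; $P(a)=N(a)^2+4T(a)^2$. An element $c$ is invertible if there is $d$ with $cd=dc=1$; this holds iff $P(c)\neq 0$. *)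

From Stdlib Require Import Reals List Arith.
Import ListNotations.
Open Scope R_scope.

(* Basis index t encodes the blade by its binary digits:
   bit 0 <-> i1, bit 1 <-> i2, bit 2 <-> i3, so that
   e0=1, e1=i1, e2=i2, e3=i1i2, e4=i3, e5=i1i3, e6=i2i3, e7=i1i2i3. *)
Record Cl12 := mkCl { c0 : R; c1 : R; c2 : R; c3 : R;
                      c4 : R; c5 : R; c6 : R; c7 : R }.

Definition coef (a : Cl12) (n : nat) : R :=
  match n with
  | 0 => c0 a | 1 => c1 a | 2 => c2 a | 3 => c3 a
  | 4 => c4 a | 5 => c5 a | 6 => c6 a | 7 => c7 a
  | _ => 0
  end.

Definition ofFun (f : nat -> R) : Cl12 :=
  mkCl (f 0%nat) (f 1%nat) (f 2%nat) (f 3%nat) (f 4%nat) (f 5%nat) (f 6%nat) (f 7%nat).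

Definition bit (n k : nat) : nat := if Nat.testbit n k then 1%nat else 0%nat.

(* Sign of the product of basis blades e_i e_j = sgn i j * e_(i xor j):
   (-1)^(number of transpositions needed + number of cancelled i2, i3),
   using i1^2 = 1, i2^2 = i3^2 = -1 and anticommutation. *)
Definition sgn (i j : nat) : R :=
  (-1) ^ (bit i 1 * bit j 0 + bit i 2 * bit j 0 + bit i 2 * bit j 1
          + bit i 1 * bit j 1 + bit i 2 * bit j 2).

Definition idx8 : list nat := seq 0 8.

Definition cl_add (a b : Cl12) : Cl12 := ofFun (fun k => coef a k + coef b k).

Definition cl_mul (a b : Cl12) : Cl12 :=
  ofFun (fun k => fold_right Rplus 0
           (map (fun i => sgn i (Nat.lxor i k) * coef a i * coef b (Nat.lxor i k)) idx8)).

Definition e (t : nat) : Cl12 := ofFun (fun k => if Nat.eqb k t then 1 else 0).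

Definition cl_one : Cl12 := e 0.

Definition invertible (c : Cl12) : Prop :=
  exists d : Cl12, cl_mul c d = cl_one /\ cl_mul d c = cl_one.

Definition Cim (a : Cl12) : Cl12 :=
  mkCl 0 (c1 a) (c2 a) (c3 a) (c4 a) (c5 a) (c6 a) 0.

Definition Nf (a : Cl12) : R :=
  c0 a ^ 2 - c1 a ^ 2 + c2 a ^ 2 - c3 a ^ 2 + c4 a ^ 2 - c5 a ^ 2 + c6 a ^ 2 - c7 a ^ 2.

Definition Tf (a : Cl12) : R :=
  c0 a * c7 a + c2 a * c5 a - c1 a * c6 a - c3 a * c4 a.

(** The Clifford conjugation [x -> conj x] (negating the grades 1 and 2) satisfies
    [x conj x = conj x x = N(x) + 2 T(x) e7], an element of the centre [R + R e7] of
    [Cl_{1,2}]; since [e7^2 = -1] this centre is a copy of the complex numbers, so [x] is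
    invertible exactly when [N(x)] and [T(x)] do not both vanish, i.e. when [P(x) <> 0].
    For [A = Cim a], [B = Cim b] and [w_t = A e_t + e_t B] a direct computation gives
    [N(w_0) - N(w_1) + N(w_2) - N(w_3) = 4 (N(A) + N(B))] and the same identity for [T].
    If no [w_t] were invertible, the left-hand sides would vanish, so
    [N(A) = -N(B) = -N(A)] and [T(A) = -T(A)], and [A] would not be invertible. *)

From Stdlib Require Import Reals Lra Lia Classical.
Open Scope R_scope.

Definition cl_conj (x : Cl12) : Cl12 :=
  mkCl (c0 x) (- c1 x) (- c2 x) (- c3 x) (- c4 x) (- c5 x) (- c6 x) (c7 x).

Definition cl_zero : Cl12 := mkCl 0 0 0 0 0 0 0 0.

Definition cl_central (s p : R) : Cl12 := mkCl s 0 0 0 0 0 0 p.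

Definition twist (x y : Cl12) (t : nat) : Cl12 :=
  cl_add (cl_mul x (e t)) (cl_mul (e t) y).

Ltac cl_compute :=
  unfold cl_mul, cl_add, ofFun, coef, idx8, sgn, bit, e, cl_one, cl_conj, cl_zero,
    cl_central, twist, Nf, Tf in *;
  cbv -[Rplus Rmult Ropp IZR Rminus Rdiv Rinv pow].

Lemma cl_mulA (x y z : Cl12) : cl_mul x (cl_mul y z) = cl_mul (cl_mul x y) z.
Proof. destruct x, y, z; cl_compute; f_equal; ring. Qed.

Lemma cl_mul1l (x : Cl12) : cl_mul cl_one x = x.
Proof. destruct x; cl_compute; f_equal; ring. Qed.

Lemma cl_mul0r (x : Cl12) : cl_mul x cl_zero = cl_zero.
Proof. destruct x; cl_compute; f_equal; ring. Qed.

Lemma cl_one_neq0 : cl_one <> cl_zero.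
Proof. intro H. exact (R1_neq_R0 (f_equal c0 H)). Qed.

Lemma cl_conjK (x : Cl12) : cl_conj (cl_conj x) = x.
Proof. destruct x; cl_compute; f_equal; ring. Qed.

Lemma cl_conj0 : cl_conj cl_zero = cl_zero.
Proof. cl_compute; f_equal; ring. Qed.

Lemma cl_mul_conj (x : Cl12) : cl_mul x (cl_conj x) = cl_central (Nf x) (2 * Tf x).
Proof. destruct x; cl_compute; f_equal; ring. Qed.

Lemma cl_conj_mul (x : Cl12) : cl_mul (cl_conj x) x = cl_central (Nf x) (2 * Tf x).
Proof. destruct x; cl_compute; f_equal; ring. Qed.

Lemma cl_central_comm (s p : R) (x : Cl12) :
  cl_mul (cl_central s p) x = cl_mul x (cl_central s p).
Proof. destruct x; cl_compute; f_equal; ring. Qed.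

(* [e7^2 = -1], so [s + p e7] is inverted like the complex number [s + p i]. *)
Lemma cl_central_inv (s p : R) : s ^ 2 + p ^ 2 <> 0 ->
  cl_mul (cl_central s p)
    (cl_central (s / (s ^ 2 + p ^ 2)) (- p / (s ^ 2 + p ^ 2))) = cl_one.
Proof. intro Hsp. cl_compute. f_equal; field; exact Hsp. Qed.

Lemma invertible_iff (x : Cl12) : invertible x <-> Nf x <> 0 \/ Tf x <> 0.
Proof.
  split.
  - intros [y [_ Hyx]].
    apply NNPP. intros [HN HT]%not_or_and. apply NNPP in HN, HT.
    assert (Hconj : cl_conj x = cl_zero).
    { rewrite <- (cl_mul1l (cl_conj x)), <- Hyx, <- cl_mulA, cl_mul_conj, HN, HT,
        Rmult_0_r.
      apply cl_mul0r. }
    assert (Hx : x = cl_zero) by now rewrite <- (cl_conjK x), Hconj, cl_conj0.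
    apply cl_one_neq0. now rewrite <- Hyx, Hx, cl_mul0r.
  - intros HNT.
    set (s := Nf x). set (p := 2 * Tf x).
    assert (Hsp : s ^ 2 + p ^ 2 <> 0).
    { unfold s, p. intro H0. destruct HNT as [H | H]; apply H; nra. }
    set (z := cl_central (s / (s ^ 2 + p ^ 2)) (- p / (s ^ 2 + p ^ 2))).
    exists (cl_mul (cl_conj x) z). split.
    + rewrite cl_mulA, cl_mul_conj. now apply cl_central_inv.
    + unfold z. rewrite <- cl_mulA, cl_central_comm, cl_mulA, cl_conj_mul.
      now apply cl_central_inv.
Qed.

Lemma not_invertible_iff (x : Cl12) : ~ invertible x <-> Nf x = 0 /\ Tf x = 0.
Proof.
  rewrite invertible_iff. split.
  - intros H. apply not_or_and in H. destruct H as [HN HT].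
    split; now apply NNPP.
  - intros [HN HT] [H | H]; contradiction.
Qed.

Lemma Nf_twist_alternating (x y : Cl12) : c0 x = 0 -> c7 x = 0 ->
  Nf (twist x y 0) - Nf (twist x y 1) + Nf (twist x y 2) - Nf (twist x y 3)
  = 4 * (Nf x + Nf y).
Proof. destruct x, y; simpl; intros -> ->; cl_compute; ring. Qed.

Lemma Tf_twist_alternating (x y : Cl12) : c0 x = 0 -> c7 x = 0 ->
  Tf (twist x y 0) - Tf (twist x y 1) + Tf (twist x y 2) - Tf (twist x y 3)
  = 4 * (Tf x + Tf y).
Proof. destruct x, y; simpl; intros -> ->; cl_compute; ring. Qed.

Theorem lemma5p1 (a b : Cl12) :
  invertible (Cim a) ->
  Nf (Cim a) = Nf (Cim b) ->
  Tf (Cim a) = Tf (Cim b) ->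
  exists t : nat, (t <= 3)%nat /\
    invertible (cl_add (cl_mul (Cim a) (e t)) (cl_mul (e t) (Cim b))).
Proof.
  intros Hinv HN HT.
  apply NNPP. intros Hnone.
  assert (Hzero : forall t, (t <= 3)%nat ->
            Nf (twist (Cim a) (Cim b) t) = 0 /\ Tf (twist (Cim a) (Cim b) t) = 0).
  { intros t Ht. apply not_invertible_iff. intros Hinv_t. apply Hnone. now exists t. }
  destruct (Hzero 0%nat) as [N0 T0]; [lia |].
  destruct (Hzero 1%nat) as [N1 T1]; [lia |].
  destruct (Hzero 2%nat) as [N2 T2]; [lia |].
  destruct (Hzero 3%nat) as [N3 T3]; [lia |].
  pose proof (Nf_twist_alternating (Cim a) (Cim b) eq_refl eq_refl) as HNsum.
  pose proof (Tf_twist_alternating (Cim a) (Cim b) eq_refl eq_refl) as HTsum.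
  revert Hinv. apply not_invertible_iff. lra.
Qed.
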